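(* Let $\mathcal{E}\subseteq[5]\times[5]$ be the erasure pattern $$\mathcal{E}=\{(1,2),(1,3),(1,4),(1,5),(2,1),(2,2),(2,3),(3,1),(3,2),(3,3),(4,1),(4,4),(4,5),(5,1),(5,4),(5,5)\},$$ i.e., as a $5\times 5$ array (row $i$, column $j$) with $\star$ marking erasures: row 1: $0\,\star\,\star\,\star\,\star$; rows 2 and 3: $\star\,\star\,\star\,0\,0$; rows 4 and 5: $\star\,0\,0\,\star\,\star$. Then $\mathcal{E}$ is regular for $T_{5\times5}(2,2,0)$, and $\mathcal{E}$ is not correctable in the topology $T_{5\times 5}(2,2,0)$.
   Context: Positions of vectors in $\mathbb{F}^{mn}$ are identified with $[m]\times[n]$, $[k]=\{1,\dots,k\}$. For linear codes $\mathcal{C}_1\subseteq\mathbb{F}^m,\mathcal{C}_2\subseteq\mathbb{F}^n$, $\mathcal{C}_1\otimes\mathcal{C}_2$ is the row span of the Kronecker product of their generator matrices (arrays with all columns in $\mathcal{C}_1$ and all rows in $\mathcal{C}_2$). A code for the topology $T_{m\times n}(a,b,0)$ is a linear code over a finite field $\mathbb{F}$ of the form $\mathcal{C}_{\mathsf{col}}\otimes\mathcal{C}_{\mathsf{row}}$ (i.e., with parity-check matrix a parity-check matrix of $\mathcal{C}_{\mathsf{col}}\otimes\mathcal{C}_{\mathsf{row}}$), where $\mathcal{C}_{\mathsf{col}}$ is a linear $[m,\geq m-a]$ code and $\mathcal{C}_{\mathsf{row}}$ a linear $[n,\geq n-b]$ code over $\mathbb{F}$; $\mathbb{C}_{m\times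 n}(a,b,0)$ is the set of these codes (over any finite field). A code corrects an erasure pattern $\mathcal{E}$ if no two distinct codewords agree on all positions outside $\mathcal{E}$; $\mathcal{E}$ is correctable in $T_{m\times n}(a,b,0)$ if some code in $\mathbb{C}_{m\times n}(a,b,0)$ corrects it. An erasure pattern $\mathcal{E}\subseteq[m]\times[n]$ is regular (for $T_{m\times n}(a,b,0)$) if for all $\mathcal{U}\subseteq[m]$ with $|\mathcal{U}|=u\geq a$ and all $\mathcal{V}\subseteq[n]$ with $|\mathcal{V}|=v\geq b$ one has $|\mathcal{E}\cap(\mathcal{U}\times\mathcal{V})|\leq va+ub-ab$. *)

From HB Require Import structures.
From mathcomp Require Import all_boot all_order all_algebra all_field.
Set Implicit Arguments. Unset Strict Implicit. Unset Printing Implicit Defensive.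
Import GRing.Theory.
Local Open Scope ring_scope.

(* A linear code C <= F^k is represented by a k x k matrix whose row space is C;
   its dimension is \rank C and v \in C is (v <= C)%MS. *)

Definition tensor_codeword (F : fieldType) (m n : nat)
  (Ccol : 'M[F]_m) (Crow : 'M[F]_n) (X : 'M[F]_(m, n)) : Prop :=
  (forall j : 'I_n, ((col j X)^T <= Ccol)%MS) /\
  (forall i : 'I_m, (row i X <= Crow)%MS).

(* Positions are 'I_m * 'I_n (0-based). The code corrects E iff no two distinct
   codewords agree on all positions outside E. *)
Definition corrects (F : fieldType) (m n : nat)
  (Ccol : 'M[F]_m) (Crow : 'M[F]_n) (E : {set 'I_m * 'I_n}) : Prop :=
  forall X Y : 'M[F]_(m, n),
    tensor_codeword Ccol Crow X -> tensor_codeword Ccol Crow Y ->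
    (forall i j, (i, j) \notin E -> X i j = Y i j) -> X = Y.

Definition correctable (m n a b : nat) (E : {set 'I_m * 'I_n}) : Prop :=
  exists (F : finFieldType) (Ccol : 'M[F]_m) (Crow : 'M[F]_n),
    (m - a <= \rank Ccol)%N /\ (n - b <= \rank Crow)%N /\ corrects Ccol Crow E.

Definition regular (m n a b : nat) (E : {set 'I_m * 'I_n}) : Prop :=
  forall (U : {set 'I_m}) (V : {set 'I_n}),
    (a <= #|U|)%N -> (b <= #|V|)%N ->
    (#|E :&: setX U V| <= #|V| * a + #|U| * b - a * b)%N.

(* The erasure pattern of the statement, listed with 1-based (row, column). *)
Definition E_list : seq (nat * nat) :=
  [:: (1,2); (1,3); (1,4); (1,5); (2,1); (2,2); (2,3); (3,1); (3,2); (3,3);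
      (4,1); (4,4); (4,5); (5,1); (5,4); (5,5)].

Definition E5 : {set 'I_5 * 'I_5} :=
  [set p : 'I_5 * 'I_5 | ((nat_of_ord p.1).+1, (nat_of_ord p.2).+1) \in E_list].

From mathcomp Require Import all_boot all_order all_algebra all_field.
From mathcomp Require Import ring.
Set Implicit Arguments. Unset Strict Implicit. Unset Printing Implicit Defensive.
Import GRing.Theory.

(* Regularity is a finite check over the membership patterns of U and V.
   For non-correctability, let G1, G2 be 3 x 5 generator matrices of
   3-dimensional subcodes, so that every G1^T M G2 is a codeword.  Outside E5
   lie only nine positions: (0,0), the block {1,2} x {3,4} and the block
   {3,4} x {1,2} (0-based).  The nine rank-one tensors g1_i (x) g2_j of the
   corresponding columns are linearly dependent: four columns of G1 in F^3
   give s_1 g1_1 + s_2 g1_2 = -(s_3 g1_3 + s_4 g1_4) =: x, likewise y for G2,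
   and x (x) y lies in the span of either block.  Hence evaluation at the nine
   positions is not injective on the nine-dimensional space of matrices M,
   and a nonzero codeword vanishes outside E5. *)

Lemma E5_regular : regular 2 2 E5.
Proof.
move=> U V; rewrite -(sum1_card [in U]) -(sum1_card [in V]).
rewrite (big_mkcond [in U]) (big_mkcond [in V]).
have -> : #|E5 :&: setX U V| = \sum_(i : 'I_5) \sum_(j : 'I_5)
    [&& ((i : nat).+1, (j : nat).+1) \in E_list, i \in U & j \in V].
  by rewrite -sum1_card big_mkcond pair_bigA; apply: eq_bigr => -[i j] _; rewrite !inE.
rewrite !big_ord_recl !big_ord0 /=.
do 10 (move: (_ \in U) || move: (_ \in V)).
by do 10 case.
Qed.

(* 0-based, whereas [E_list] is 1-based. *)
Definition unerased_list : seq (nat * nat) :=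
  [:: (0, 0); (1, 3); (1, 4); (2, 3); (2, 4); (3, 1); (3, 2); (4, 1); (4, 2)].

(* [inZp] rather than [inord]: its value reduces, so statements about concrete
   positions are decided by evaluation. *)
Definition unerased (q : 'I_9) : 'I_5 * 'I_5 :=
  let: (i, j) := nth (0, 0) unerased_list q in (inZp i, inZp j).

Lemma unerased_cover (x : 'I_5 * 'I_5) : x \notin E5 -> exists q, unerased q = x.
Proof.
case: x => i j; rewrite inE => ij_unerased.
exists (inZp (index (i : nat, j : nat) unerased_list)); apply/eqP; move: ij_unerased.
by case: i => [[|[|[|[|[|//]]]]] ?]; case: j => [[|[|[|[|[|//]]]]] ?].
Qed.

Lemma unerased_in_row (i : 'I_5) : exists j, (i, j) \notin E5.
Proof.
by case: i => [[|[|[|[|[|//]]]]] ?];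
  [ exists (inZp 0) | exists (inZp 3) | exists (inZp 3)
  | exists (inZp 1) | exists (inZp 1) ]; rewrite inE.
Qed.

Lemma unerased_in_col (j : 'I_5) : exists i, (i, j) \notin E5.
Proof.
by case: j => [[|[|[|[|[|//]]]]] ?];
  [ exists (inZp 0) | exists (inZp 3) | exists (inZp 3)
  | exists (inZp 1) | exists (inZp 1) ]; rewrite inE.
Qed.

Section TensorCodes.
Variable F : fieldType.
Local Open Scope ring_scope.

Lemma row_freePn_ker m n (A : 'M[F]_(m, n)) :
  ~~ row_free A -> exists2 v : 'rV_m, v != 0 & v *m A = 0.
Proof. by rewrite -kermx_eq0 => /rowV0Pn[v /sub_kermxP vA0 v_neq0]; exists v. Qed.

Lemma column_relation_vanishing_at k n (G : 'M[F]_(k, n)) (i0 : 'I_n) :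
  (k.+1 < n)%N -> exists s : 'rV_n, [/\ s != 0, s 0 i0 = 0 & s *m G^T = 0].
Proof.
move=> lt_kn.
have /row_freePn_ker[s s_neq0] : ~~ row_free (row_mx G^T (delta_mx i0 (0 : 'I_1))).
  by rewrite -row_leq_rank -ltnNge (leq_ltn_trans (rank_leq_col _)) ?addn1.
rewrite mul_mx_row -colE -row_mx0 => /eq_row_mx[sG0 /colP/(_ 0)].
by rewrite !mxE => s_i0; exists s.
Qed.

Lemma row_free_tensor_eq0 k l m n (G1 : 'M[F]_(k, m)) (G2 : 'M[F]_(l, n)) M :
  row_free G1 -> row_free G2 -> (G1^T *m M *m G2 == 0) = (M == 0).
Proof.
move=> free1 free2.
by rewrite mulmx_free_eq0 // -trmx_eq0 trmx_mul trmxK mulmx_free_eq0 // trmx_eq0.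
Qed.

Lemma tensor_codeword_mul m n (Ccol : 'M[F]_m) (Crow : 'M[F]_n) k l
    (G1 : 'M_(k, m)) (G2 : 'M_(l, n)) M :
  (G1 <= Ccol)%MS -> (G2 <= Crow)%MS -> tensor_codeword Ccol Crow (G1^T *m M *m G2).
Proof.
move=> sG1 sG2; split=> [j | i]; last by rewrite row_mul (submx_trans (submxMl _ _)).
by rewrite colE -!mulmxA trmx_mul trmxK (submx_trans (submxMl _ _)).
Qed.

Definition tensor_relation k l m n p (G1 : 'M[F]_(k, m)) (G2 : 'M[F]_(l, n))
    (pos : 'I_p -> 'I_m * 'I_n) (w : 'cV[F]_p) :=
  forall a b, \sum_q w q 0 * (G1 a (pos q).1 * G2 b (pos q).2) = 0.

Lemma tensor_vanishing_at_dependent_positions k l m n p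
    (G1 : 'M[F]_(k, m)) (G2 : 'M[F]_(l, n)) (pos : 'I_p -> 'I_m * 'I_n) (w : 'cV_p) :
  w != 0 -> tensor_relation G1 G2 pos w -> (p <= k * l)%N ->
  exists2 M : 'M_(k, l), M != 0 & forall q, (G1^T *m M *m G2) (pos q).1 (pos q).2 = 0.
Proof.
move=> w_neq0 w_rel p_le.
(* K evaluates mxvec M at the positions; w is a relation among its columns. *)
pose K := colsub (fun q => mxvec_index (pos q).1 (pos q).2)
                 (lin_mx (mulmxr G2 \o mulmx G1^T)).
have K_entry a b q : K (mxvec_index a b) q = G1 a (pos q).1 * G2 b (pos q).2.
  rewrite /K /lin_mx /lin1_mx !mxE /= vec_mx_delta mxvecE /=.
  rewrite -(mul_delta_mx (0 : 'I_1)) mulmxA -colE -mulmxA -rowE.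
  by rewrite !mxE big_ord1 !mxE.
have Kw : K *m w = 0.
  apply/colP => r; case/mxvec_indexP: r => a b; rewrite !mxE -[RHS](w_rel a b).
  by apply: eq_bigr => q _; rewrite K_entry mulrC.
have /row_freePn_ker[v v_neq0 vK] : ~~ row_free K.
  have : ~~ row_free K^T.
    apply: contraNN w_neq0 => /mulmx_free_eq0 free.
    by rewrite -trmx_eq0 -free -trmx_mul Kw trmx0.
  rewrite -!row_leq_rank mxrank_tr -!ltnNge => /leq_trans; exact.
exists (vec_mx v); first by rewrite vec_mx_eq0.
move=> q; move/rowP/(_ q): vK.
by rewrite mulmx_colsub -{1}[v]vec_mxK mul_vec_lin mxE mxvecE => ->; rewrite mxE.
Qed.

Lemma row_free_sub_of_rank r n (C : 'M[F]_n) :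
  (r <= \rank C)%N -> exists2 G : 'M[F]_(r, n), row_free G & (G <= C)%MS.
Proof.
move=> le_rC; exists (pid_mx r *m row_base C).
  by rewrite -row_leq_rank mxrankMfree ?row_base_free // rank_pid_mx.
by rewrite (submx_trans (submxMl _ _)) // eq_row_base.
Qed.

End TensorCodes.

Section Crossing.
Variable F : fieldType.
Local Open Scope ring_scope.

Lemma sum_ord5 (V : nmodType) (f : 'I_5 -> V) :
  \sum_i f i = f (inZp 0) + f (inZp 1) + f (inZp 2) + f (inZp 3) + f (inZp 4).
Proof.
rewrite !big_ord_recl big_ord0 addr0 !addrA.
by congr (_ + _ + _ + _ + _); congr (f _); apply: val_inj.
Qed.

Definition pair_sum (u : 'I_5 -> F) (G : 'M[F]_(3, 5)) (a : 'I_3) (i j : nat) :=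
  u (inZp i) * G a (inZp i) + u (inZp j) * G a (inZp j).

Lemma column_relation_pair_sums (G : 'M[F]_(3, 5)) (u : 'rV_5) a :
  u 0 (inZp 0) = 0 -> u *m G^T = 0 ->
  pair_sum (u 0) G a 1 2 = - pair_sum (u 0) G a 3 4.
Proof.
move=> u0 /rowP/(_ a); rewrite !mxE sum_ord5 !mxE u0 mul0r add0r -addrA => /eqP.
by rewrite addr_eq0 => /eqP.
Qed.

Lemma pair_sum_neq0 u G a i j :
  pair_sum u G a i j != 0 -> u (inZp i) != 0 \/ u (inZp j) != 0.
Proof.
move=> nz; have [ui0 | ] := eqVneq (u (inZp i)) 0; last by left.
by right; apply: contraNneq nz => uj0; rewrite /pair_sum ui0 uj0 !mul0r addr0.
Qed.

Definition crossing (s t : 'I_5 -> F) : 'cV[F]_9 :=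
  \col_q ((-1) ^+ (2 < (unerased q).1)%N * s (unerased q).1 * t (unerased q).2).

Lemma crossing_neq0 (s t : 'I_5 -> F) i j :
  (i, j) \notin E5 -> s i * t j != 0 -> crossing s t != 0.
Proof.
move=> /unerased_cover[q uq] st_neq0; apply/eqP => /colP/(_ q).
by rewrite !mxE uq -mulrA => /eqP; rewrite mulf_eq0 signr_eq0 (negbTE st_neq0).
Qed.

Variables G1 G2 : 'M[F]_(3, 5).

Lemma crossing_relationE s t a b :
  \sum_q crossing s t q 0 * (G1 a (unerased q).1 * G2 b (unerased q).2)
  = s (inZp 0) * t (inZp 0) * G1 a (inZp 0) * G2 b (inZp 0)
    + pair_sum s G1 a 1 2 * pair_sum t G2 b 3 4
    - pair_sum s G1 a 3 4 * pair_sum t G2 b 1 2.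
Proof. by rewrite /pair_sum !big_ord_recl big_ord0 !mxE /=; ring. Qed.

Lemma crossing_relation s t :
  s (inZp 0) * t (inZp 0) = 0 ->
  (forall a b, pair_sum s G1 a 1 2 * pair_sum t G2 b 3 4
               = pair_sum s G1 a 3 4 * pair_sum t G2 b 1 2) ->
  tensor_relation G1 G2 unerased (crossing s t).
Proof.
by move=> st0 balanced a b; rewrite crossing_relationE st0 !mul0r add0r balanced subrr.
Qed.

Lemma unerased_tensor_relation :
  exists2 w : 'cV[F]_9, w != 0 & tensor_relation G1 G2 unerased w.
Proof.
have [s [s_neq0 s0 sG1]] := column_relation_vanishing_at G1 (inZp 0) isT.
have [t [t_neq0 t0 tG2]] := column_relation_vanishing_at G2 (inZp 0) isT.
have xs a := column_relation_pair_sums a s0 sG1.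
have yt b := column_relation_pair_sums b t0 tG2.
(* If s splits into relations within columns {1,2} and {3,4}, then t can be
   replaced by 1, and symmetrically. *)
have [xs0 | /forallPn[a0 xa]] := boolP [forall a, pair_sum (s 0) G1 a 1 2 == 0].
  have [i si] := rV0Pn _ s_neq0; have [j ij] := unerased_in_row i.
  exists (crossing (s 0) (fun=> 1)); first by apply: (crossing_neq0 ij); rewrite mulr1.
  apply: crossing_relation => [|a b]; first by rewrite s0 mul0r.
  have /eqP xa0 := forallP xs0 a.
  have x'a0 : pair_sum (s 0) G1 a 3 4 = 0 by apply/eqP; rewrite -oppr_eq0 -xs xa0.
  by rewrite xa0 x'a0 !mul0r.
have [yt0 | /forallPn[b0 yb]] := boolP [forall b, pair_sum (t 0) G2 b 1 2 == 0].
  have [j tj] := rV0Pn _ t_neq0; have [i ij] := unerased_in_col j.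
  exists (crossing (fun=> 1) (t 0)); first by apply: (crossing_neq0 ij); rewrite mul1r.
  apply: crossing_relation => [|a b]; first by rewrite t0 mulr0.
  have /eqP yb0 := forallP yt0 b.
  have y'b0 : pair_sum (t 0) G2 b 3 4 = 0 by apply/eqP; rewrite -oppr_eq0 -yt yb0.
  by rewrite yb0 y'b0 !mulr0.
exists (crossing (s 0) (t 0)).
  rewrite yt oppr_eq0 in yb.
  by case: (pair_sum_neq0 xa) => si; case: (pair_sum_neq0 yb) => tj;
    apply: crossing_neq0 (mulf_neq0 si tj); rewrite inE.
apply: crossing_relation => [|a b]; first by rewrite s0 mul0r.
by rewrite xs yt mulNr mulrN.
Qed.

End Crossing.

Theorem lemma4 : regular 2 2 E5 /\ ~ correctable 2 2 E5.
Proof.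
split; first exact: E5_regular.
move=> [F [Ccol [Crow [rk_col [rk_row corrects_E5]]]]].
have [G1 free1 sG1] := row_free_sub_of_rank rk_col.
have [G2 free2 sG2] := row_free_sub_of_rank rk_row.
have [w w_neq0 w_rel] := unerased_tensor_relation G1 G2.
have [M M_neq0 M_unerased] :=
  tensor_vanishing_at_dependent_positions w_neq0 w_rel isT.
have : (G1^T *m M *m G2 = G1^T *m 0 *m G2)%R.
  apply: corrects_E5; try exact: tensor_codeword_mul.
  move=> i j /unerased_cover[q uq]; move: (M_unerased q).
  by rewrite uq mulmx0 mul0mx => ->; rewrite mxE.
by rewrite mulmx0 mul0mx => /eqP; rewrite row_free_tensor_eq0 // (negbTE M_neq0).
Qed.
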